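(* Let $k\in\mathbb{N}$ and let $B$ be the $3k\times 2k$ matrix $B=\begin{bmatrix}2I_{2k}\\ -2\,I_k\otimes[1,1]\end{bmatrix}$. Let $A_1,A_2$ be $3k\times 2k$ real matrices such that (1) $A_1\ge0$ and $A_2\ge0$ entrywise; (2) for all $i\in[3k]$ and $j\in[k]$, $A_2(i,2j-1)=A_2(i,2j)$; (3) every row of $A_1+A_2/2$ has entry sum at most $1$. Then $B+A_1-A_2$ has rank $2k$.
   Context: $I_m$ is the $m\times m$ identity matrix; $I_k\otimes[1,1]$ is the $k\times 2k$ matrix whose $j$-th row has entries $1$ in columns $2j-1$ and $2j$ and $0$ elsewhere. *)

From mathcomp Require Import all_boot all_order all_algebra.
From mathcomp Require Import reals.
Set Implicit Arguments. Unset Strict Implicit. Unset Printing Implicit Defensive.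
Import Order.TTheory GRing.Theory Num.Theory.
Local Open Scope ring_scope.

(* B = [ 2 I_{2k} ; -2 I_k (x) [1,1] ], a 3k x 2k matrix.  Indices are 0-based:
   row i < 2k : entry 2 at column i;
   row 2k + j (j < k) : entry -2 at columns 2j and 2j+1 (0-based),
   i.e. columns 2j-1, 2j in 1-based numbering. *)
Definition Bmat (R : ringType) (k : nat) : 'M[R]_(3 * k, 2 * k) :=
  \matrix_(i < 3 * k, j < 2 * k)
    if (i < 2 * k)%N then (if (i : nat) == (j : nat) then 2 else 0)
    else (if ((j : nat)./2 == (i : nat) - 2 * k)%N then -2 else 0).

From mathcomp Require Import all_boot all_order all_algebra.
From mathcomp Require Import reals.
From mathcomp Require Import zify ring lra.
Import Order.TTheory GRing.Theory Num.Theory.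
Set Implicit Arguments. Unset Strict Implicit.
Local Open Scope ring_scope.

(* It suffices that M = B + A1 - A2 has trivial kernel.  Let
   M x = 0, pair every column j with its partner j' (the other column of the
   same block 2j, 2j+1) and put z_j = x_j + x_j'.  Because A2 is constant on
   blocks, (A2 x)_i = sum_j A2(i,j)/2 * z_j, so (A1 - A2) x = A1 x - (A2/2) z.
   If c bounds all |x_j| and |z_j|, the row-sum condition (3) then bounds every
   entry of (A1 - A2) x by c.  Since B x = -(A1 - A2) x and the rows of B read
   off 2 x_j and -2 z_j, we get 2|x_j| <= c and 2|z_j| <= c for every such c:
   a contraction, which forces x = z = 0.
   The file first proves the general facts (full rank from a trivial left
   kernel, the partner involution on 'I_(2k), symmetrization of sums along an
   involution, the weighted-sum bound, the contraction principle, the rows of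
   B), then the perturbation bound for A1 - A2, and finally the theorem. *)

Lemma rank_full (F : fieldType) m n (M : 'M[F]_(m, n)) :
  (forall u : 'rV_n, u *m M^T = 0 -> u = 0) -> \rank M = n.
Proof. by move=> kerM0; rewrite -mxrank_tr; apply/eqP; exact: inj_row_free. Qed.

Section Partner.

Variable k : nat.

(* The partner of column j is the other column of its block, i.e. j xor 1. *)
Lemma partner_lt (j : 'I_(2 * k)) : ((j./2).*2 + ~~ odd j < 2 * k)%N.
Proof. have := ltn_ord j; have := odd_double_half j; case: (odd j) => /=; lia. Qed.

Definition partner (j : 'I_(2 * k)) : 'I_(2 * k) := Ordinal (partner_lt j).

Lemma partner_half j : ((partner j)./2 = j./2)%N.
Proof. by rewrite /= addnC half_bit_double. Qed.

Lemma partner_odd j : odd (partner j) = ~~ odd j.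
Proof. by rewrite /= oddD odd_double oddb. Qed.

Lemma same_block (j j' : 'I_(2 * k)) :
  (j'./2 = j./2)%N -> j' = j \/ j' = partner j.
Proof.
move=> eq_half; have ej := odd_double_half j; have ej' := odd_double_half j'.
have pv : val (partner j) = (j./2.*2 + ~~ odd j)%N by [].
rewrite eq_half in ej'.
case: (odd j) in ej pv; case: (odd j') in ej';
  [left | right | right | left]; apply/val_inj; rewrite ?pv /= in ej ej' *; lia.
Qed.

Lemma partner_neq j : partner j != j.
Proof. by apply/eqP => /(congr1 (fun i : 'I__ => odd i)); rewrite partner_odd; case: odd. Qed.

Lemma partnerK : involutive partner.
Proof.
move=> j; have half_pp : ((partner (partner j))./2 = j./2)%N by rewrite !partner_half.
case: (same_block half_pp) => // pj.
by have := partner_neq (partner j); rewrite pj eqxx.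
Qed.

End Partner.

Lemma sum_involution_average (R : numFieldType) (I : finType) (p : I -> I)
    (w x : I -> R) :
  involutive p -> (forall j, w (p j) = w j) ->
  \sum_j w j * x j = \sum_j w j / 2 * (x j + x (p j)).
Proof.
move=> pK wp; under [RHS]eq_bigr do rewrite mulrDr.
rewrite big_split /= [X in _ + X](reindex_inj (inv_inj pK)) /=.
under [X in _ + X]eq_bigr do rewrite pK wp.
by rewrite -big_split /=; apply: eq_bigr => j _; field.
Qed.

Lemma weighted_sum_bound (R : numDomainType) (I : finType) (a b x y : I -> R)
    (c : R) :
  (forall j, 0 <= a j) -> (forall j, 0 <= b j) ->
  \sum_j (a j + b j) <= 1 -> 0 <= c ->
  (forall j, `|x j| <= c) -> (forall j, `|y j| <= c) ->
  `|\sum_j (a j * x j - b j * y j)| <= c.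
Proof.
move=> a0 b0 mass c0 xc yc; apply: le_trans (ler_norm_sum _ _ _) _.
apply: le_trans (_ : \sum_j (a j + b j) * c <= c).
  apply: ler_sum => j _; apply: le_trans (ler_normB _ _) _.
  by rewrite !normrM (ger0_norm (a0 j)) (ger0_norm (b0 j)) mulrDl
    lerD ?ler_wpM2l.
by rewrite -mulr_suml -[X in _ <= X]mul1r ler_wpM2r.
Qed.

(* A finite family bounded by every c that bounds it at twice its size
   vanishes: take c = max_i |f i|, then c <= c / 2. *)
Lemma contraction_zero (R : realFieldType) (I : finType) (f : I -> R) :
  (forall c, 0 <= c -> (forall i, `|f i| <= c) -> forall i, 2 * `|f i| <= c) ->
  forall i, f i = 0.
Proof.
move=> contract; pose c := \big[Order.max/0]_i `|f i|.
have fc i : `|f i| <= c by apply: le_bigmax.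
have c0 : 0 <= c by rewrite /c; elim/big_ind: _ => // a b a0 _; rewrite le_max a0.
have c_half : c <= c / 2.
  apply: bigmax_le => [|i _]; first by rewrite divr_ge0.
  by have := contract c c0 fc i; lra.
by move=> i; apply/eqP; rewrite -normr_eq0 eq_le normr_ge0 andbT; have := fc i; lra.
Qed.

Section BRows.

Variable k : nat.

Lemma two_k_le_three_k : (2 * k <= 3 * k)%N.
Proof. by rewrite leq_mul2r leqnSn orbT. Qed.

Definition top_row (j : 'I_(2 * k)) : 'I_(3 * k) := widen_ord two_k_le_three_k j.

Lemma bottom_row_lt (j : 'I_(2 * k)) : (2 * k + j./2 < 3 * k)%N.
Proof. have := ltn_ord j; have := odd_double_half j; lia. Qed.

Definition bottom_row (j : 'I_(2 * k)) : 'I_(3 * k) := Ordinal (bottom_row_lt j).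

Lemma Bmat_top (R : nzRingType) (x : 'I_(2 * k) -> R) j :
  \sum_j' Bmat R k (top_row j) j' * x j' = 2 * x j.
Proof.
rewrite (bigD1 j) //= big1 => [|j' j'_neq]; rewrite mxE /= ltn_ord.
  by rewrite eqxx addr0.
by case: eqP => [/val_inj ej | _]; [rewrite ej eqxx in j'_neq | rewrite mul0r].
Qed.

Lemma Bmat_bottom (R : nzRingType) (x : 'I_(2 * k) -> R) j :
  \sum_j' Bmat R k (bottom_row j) j' * x j' = - (2 * (x j + x (partner j))).
Proof.
have not_top : (2 * k + j./2 < 2 * k)%N = false by rewrite ltnNge leq_addr.
rewrite (bigD1 j) // (bigD1 (partner j)) /= ?partner_neq //.
rewrite big1 => [|j' /andP [j'_neq_j j'_neq_pj]].
  by rewrite !mxE /= not_top addKn partner_half eqxx addr0 mulNr mulNr mulrDr opprD.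
rewrite mxE /= not_top addKn; case: eqP => [/same_block [] ej' | _]; last by rewrite mul0r.
- by rewrite ej' eqxx in j'_neq_j.
- by rewrite ej' eqxx in j'_neq_pj.
Qed.

End BRows.

Section Perturbation.

Variables (R : realFieldType) (k : nat) (A1 A2 : 'M[R]_(3 * k, 2 * k)).
Hypothesis A1_ge0 : forall i j, 0 <= A1 i j.
Hypothesis A2_ge0 : forall i j, 0 <= A2 i j.
Hypothesis A2_block :
  forall i (j j' : 'I_(2 * k)), (j./2 = j'./2)%N -> A2 i j = A2 i j'.
Hypothesis row_mass : forall i, \sum_(j < 2 * k) (A1 i j + A2 i j / 2) <= 1.

Lemma perturbation_bound (x : 'I_(2 * k) -> R) (c : R) :
  0 <= c -> (forall j, `|x j| <= c) -> (forall j, `|x j + x (partner j)| <= c) ->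
  forall i, `|\sum_j (A1 i j - A2 i j) * x j| <= c.
Proof.
move=> c0 xc zc i.
have A2_avg := sum_involution_average x (@partnerK k)
  (fun j => A2_block i (partner_half j)).
under eq_bigr do rewrite mulrBl.
rewrite sumrB A2_avg -sumrB.
by apply: weighted_sum_bound => // j; rewrite divr_ge0.
Qed.

End Perturbation.

Theorem lemma17 (R : realType) (k : nat) (A1 A2 : 'M[R]_(3 * k, 2 * k)) :
  (forall i j, 0 <= A1 i j) ->
  (forall i j, 0 <= A2 i j) ->
  (forall i (j j' : 'I_(2 * k)), (j ./2 = j' ./2)%N -> A2 i j = A2 i j') ->
  (forall i, \sum_(j < 2 * k) (A1 i j + A2 i j / 2) <= 1) ->
  \rank (Bmat R k + A1 - A2) = (2 * k)%N.
Proof.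
move=> A1_ge0 A2_ge0 A2_block row_mass; apply: rank_full => u uM0.
pose x j := u 0 j.
have B_row i : \sum_j Bmat R k i j * x j = - \sum_j (A1 i j - A2 i j) * x j.
  apply/eqP; rewrite -subr_eq0 opprK -big_split /=.
  have := congr1 (fun v : 'rV_(3 * k) => v 0 i) uM0; rewrite !mxE => uM0_i.
  by rewrite -[X in _ == X]uM0_i; apply/eqP/eq_bigr => j _; rewrite /x !mxE; ring.
(* The family (x_j, z_j); rows top_row j and bottom_row j of M x = 0 show
   that it contracts. *)
pose f (p : bool * 'I_(2 * k)) := if p.1 then x p.2 else x p.2 + x (partner p.2).
have f0 : forall p, f p = 0.
  apply: contraction_zero => c c0 fc [[] j] /=;
  have := perturbation_bound A1_ge0 A2_ge0 A2_block row_mass c0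
    (fun j => fc (true, j)) (fun j => fc (false, j));
  [move/(_ (top_row j)) | move/(_ (bottom_row j))];
  by rewrite -normrN -B_row ?Bmat_top ?Bmat_bottom ?normrN normrM ger0_norm.
by apply/rowP => j; rewrite mxE; exact: f0 (true, j).
Qed.
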